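(* Let $q$ be such that the Jost solutions exist and let $\Phi^\pm=[\phi_1^\pm,\phi_2^\pm]=(\phi^\pm_{ij})$, with columns extended analytically as usual ($\phi_1^-,\phi_2^+$ to $\mathbb{D}_+$, $\phi_1^+,\phi_2^-$ to $\mathbb{D}_-$). Define the squared eigenfunctions $$\Omega_{+,1}=\begin{pmatrix}(\phi^-_{11})^2\\(\phi^-_{21})^2\end{pmatrix},\ \Omega_{-,2}=\begin{pmatrix}(\phi^-_{12})^2\\(\phi^-_{22})^2\end{pmatrix},\ \Omega_{-,1}=\begin{pmatrix}(\phi^+_{21})^2\\-(\phi^+_{11})^2\end{pmatrix},\ \Omega_{+,2}=\begin{pmatrix}(\phi^+_{22})^2\\-(\phi^+_{12})^2\end{pmatrix}.$$ Then, with $\hat q=q_x$, $\hat r=q_x^*$, $$\mathcal{L}(\sigma_3\partial_x\Omega_{+,1})=-\lambda^2\sigma_3\partial_x\Omega_{+,1},\quad \mathcal{L}(\sigma_3\partial_x\Omega_{-,2})=-\lambda^2\sigma_3\partial_x\Omega_{-,2},$$ $$\widetilde{\mathcal{L}}(\sigma_3\partial_x\Omega_{-,1})=-\lambda^2\sigma_3\partial_x\Omega_{-,1},\quad \widetilde{\mathcal{L}}(\sigma_3\partial_x\Omega_{+,2})=-\lambda^2\sigma_3\partial_x\Omega_{+,2},$$ for $\lambda$ in the respective domains of analyticity (or on $\Sigma$).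
   Context: $\sigma_3=\mathrm{diag}(1,-1)$. $q(x,t)$ complex-valued, rapidly decaying with its derivatives as $|x|\to\infty$; $Q=\begin{pmatrix}0&q\\ q^*&0\end{pmatrix}$. $\Phi^\pm(\lambda;x,t)$ are the solutions of $\Phi_x=(-\mathrm{i}\lambda^2\sigma_3+\lambda Q_x)\Phi$ with $\Phi^\pm e^{\mathrm{i}\lambda^2x\sigma_3}\to\mathbb{I}$ as $x\to\pm\infty$. $\Sigma=\mathbb{R}\cup\mathrm{i}\mathbb{R}$, $\mathbb{D}_+=\{\arg\lambda\in(0,\pi/2)\cup(\pi,3\pi/2)\}$, $\mathbb{D}_-=\{\arg\lambda\in(\pi/2,\pi)\cup(3\pi/2,2\pi)\}$. With $\partial=\partial_x$, $\partial_-^{-1}f=\int_{-\infty}^xf(y)\mathrm{d}y$, $\partial_+^{-1}f=\int_x^{+\infty}f(y)\mathrm{d}y$, the recursion operator and its adjoint act on vectors $(w_1,w_2)^\top$ by $$\mathcal{L}=-\frac12\begin{pmatrix}\mathrm{i}\partial+\hat q_x\partial_-^{-1}\hat r+\hat q\hat r&\hat q_x\partial_-^{-1}\hat q+\hat q^2\\ \hat r_x\partial_-^{-1}\hat r+\hat r^2&-\mathrm{i}\partial+\hat r_x\partial_-^{-1}\hat q+\hat q\hat r\end{pmatrix},\quad \widetilde{\mathcal{L}}=-\frac12\begin{pmatrix}-\mathrm{i}\partial-\hat r_x\partial_+^{-1}\hat q+\hat q\hat r&\hat r_x\partial_+^{-1}\hat r-\hat r^2\\ \hat q_x\partial_+^{-1}\hat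 q-\hat q^2&\mathrm{i}\partial-\hat q_x\partial_+^{-1}\hat r+\hat q\hat r\end{pmatrix},$$ where e.g. $\hat q_x\partial_-^{-1}\hat r$ means $w\mapsto \hat q_x\int_{-\infty}^x\hat r(y)w(y)\mathrm{d}y$ and $\hat q\hat r$ is multiplication. *)

From Stdlib Require Import Reals.
From Coquelicot Require Import Coquelicot.
Open Scope R_scope.

Definition cexp (z : C) : C :=
  (exp (Re z) * cos (Im z), exp (Re z) * sin (Im z)).

(* Derivative of a complex-valued function of a real variable
   (componentwise; it is the true derivative whenever f is differentiable). *)
Definition Cderiv (f : R -> C) (x : R) : C :=
  (Derive (fun y => Re (f y)) x, Derive (fun y => Im (f y)) x).

Definition rapidly_decaying (q : R -> C) : Prop :=
  (forall n x, ex_derive_n (fun y => Re (q y)) n x /\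
               ex_derive_n (fun y => Im (q y)) n x) /\
  (forall n k : nat, exists M : R, forall x,
      Rabs (x ^ k * Derive_n (fun y => Re (q y)) n x) <= M /\
      Rabs (x ^ k * Derive_n (fun y => Im (q y)) n x) <= M).

Definition Sigma (lam : C) : Prop := Im lam = 0 \/ Re lam = 0.
(* arg lam in (0, pi/2) \/ (pi, 3pi/2) *)
Definition D_plus (lam : C) : Prop :=
  (0 < Re lam /\ 0 < Im lam) \/ (Re lam < 0 /\ Im lam < 0).
(* arg lam in (pi/2, pi) \/ (3pi/2, 2pi) *)
Definition D_minus (lam : C) : Prop :=
  (Re lam < 0 /\ 0 < Im lam) \/ (0 < Re lam /\ Im lam < 0).

(* A column (a, b) solves  Phi_x = (-i lam^2 sigma3 + lam Q_x) Phi,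
   Q_x = [[0, q_x], [q_x^*, 0]]. *)
Definition lax_ode (qx : R -> C) (lam : C) (a b : R -> C) : Prop :=
  forall x,
    is_derive a x (- (Ci * lam * lam) * a x + lam * qx x * b x)%C /\
    is_derive b x (Ci * lam * lam * b x + lam * Cconj (qx x) * a x)%C.

Definition Clim (f : R -> C) (F : (R -> Prop) -> Prop) (l : C) : Prop :=
  filterlim (fun x => Re (f x)) F (locally (Re l)) /\
  filterlim (fun x => Im (f x)) F (locally (Im l)).

Definition minf : (R -> Prop) -> Prop := Rbar_locally m_infty.
Definition pinf : (R -> Prop) -> Prop := Rbar_locally p_infty.

(* Jost-solution columns, characterised by the ODE and the asymptotics
   Phi^{+-} e^{i lam^2 x sigma3} -> I as x -> +-oo. *)
Definition jost_col1 (qx : R -> C) (lam : C) (F : (R -> Prop) -> Prop)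
    (a b : R -> C) : Prop :=
  lax_ode qx lam a b /\
  Clim (fun x => a x * cexp (Ci * lam * lam * RtoC x))%C F (RtoC 1) /\
  Clim (fun x => b x * cexp (Ci * lam * lam * RtoC x))%C F (RtoC 0).

Definition jost_col2 (qx : R -> C) (lam : C) (F : (R -> Prop) -> Prop)
    (a b : R -> C) : Prop :=
  lax_ode qx lam a b /\
  Clim (fun x => a x * cexp (- (Ci * lam * lam * RtoC x)))%C F (RtoC 0) /\
  Clim (fun x => b x * cexp (- (Ci * lam * lam * RtoC x)))%C F (RtoC 1).

(* partial_-^{-1} f (x) = int_{-oo}^x f,  partial_+^{-1} f (x) = int_x^{+oo} f *)
Definition int_minus (f : R -> C) (x : R) : C :=
  @RInt_gen C_R_CompleteNormedModule f minf (at_point x).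
Definition int_plus (f : R -> C) (x : R) : C :=
  @RInt_gen C_R_CompleteNormedModule f (at_point x) pinf.
Definition conv_minus (f : R -> C) : Prop :=
  forall x, @ex_RInt_gen C_R_NormedModule f minf (at_point x).
Definition conv_plus (f : R -> C) : Prop :=
  forall x, @ex_RInt_gen C_R_NormedModule f (at_point x) pinf.

Definition L_op1 (qh rh w1 w2 : R -> C) (x : R) : C :=
  (- / 2 * ( Ci * Cderiv w1 x
             + Cderiv qh x * int_minus (fun y => rh y * w1 y) x
             + qh x * rh x * w1 x
             + Cderiv qh x * int_minus (fun y => qh y * w2 y) x
             + qh x * qh x * w2 x))%C.
Definition L_op2 (qh rh w1 w2 : R -> C) (x : R) : C :=
  (- / 2 * ( Cderiv rh x * int_minus (fun y => rh y * w1 y) x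
             + rh x * rh x * w1 x
             - Ci * Cderiv w2 x
             + Cderiv rh x * int_minus (fun y => qh y * w2 y) x
             + qh x * rh x * w2 x))%C.

Definition Lt_op1 (qh rh w1 w2 : R -> C) (x : R) : C :=
  (- / 2 * ( - (Ci * Cderiv w1 x)
             - Cderiv rh x * int_plus (fun y => qh y * w1 y) x
             + qh x * rh x * w1 x
             + Cderiv rh x * int_plus (fun y => rh y * w2 y) x
             - rh x * rh x * w2 x))%C.
Definition Lt_op2 (qh rh w1 w2 : R -> C) (x : R) : C :=
  (- / 2 * ( Cderiv qh x * int_plus (fun y => qh y * w1 y) x
             - qh x * qh x * w1 x
             + Ci * Cderiv w2 x
             - Cderiv qh x * int_plus (fun y => rh y * w2 y) x
             + qh x * rh x * w2 x))%C.

Definition L_eigen (qh rh : R -> C) (lam : C) (w1 w2 : R -> C) : Prop :=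
  conv_minus (fun y => rh y * w1 y)%C /\ conv_minus (fun y => qh y * w2 y)%C /\
  (forall x, ex_derive w1 x /\ ex_derive w2 x) /\
  forall x, L_op1 qh rh w1 w2 x = (- (lam * lam) * w1 x)%C /\
            L_op2 qh rh w1 w2 x = (- (lam * lam) * w2 x)%C.

Definition Lt_eigen (qh rh : R -> C) (lam : C) (w1 w2 : R -> C) : Prop :=
  conv_plus (fun y => qh y * w1 y)%C /\ conv_plus (fun y => rh y * w2 y)%C /\
  (forall x, ex_derive w1 x /\ ex_derive w2 x) /\
  forall x, Lt_op1 qh rh w1 w2 x = (- (lam * lam) * w1 x)%C /\
            Lt_op2 qh rh w1 w2 x = (- (lam * lam) * w2 x)%C.

(* sigma3 d/dx of a vector (O1, O2): (O1', -O2'). *)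
Definition s3dx1 (O1 : R -> C) : R -> C := fun x => Cderiv O1 x.
Definition s3dx2 (O2 : R -> C) : R -> C := fun x => (- Cderiv O2 x)%C.

(* Let (a, b) be a column solution: a' = -i lam^2 a + lam q_x b, b' = i lam^2 b + lam q_x^* a.
   For w = sigma3 d/dx (a^2, b^2) = ((a^2)', -(b^2)') the two nonlocal terms of L combine
   into one exact derivative,
       q_x^* (a^2)' - q_x (b^2)' = -2 i lam (a b)'      (conservation law),
   so their integrals over (-oo, x] add up to -2 i lam a b (x) as soon as a b -> 0 at -oo.
   Then L w = -lam^2 w becomes a polynomial identity in a, b, q_x, q_xx after eliminating
   derivatives through the equation.  The adjoint case is symmetric, with integrals over
   [x, +oo) and the vector sigma3 d/dx (b^2, -a^2). *)

From Stdlib Require Import Reals Lra FunctionalExtensionality.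
From Coquelicot Require Import Coquelicot.
Open Scope R_scope.

Notation is_Cderive := (@is_derive R_AbsRing C_R_NormedModule).

Lemma is_Cderive_parts (f : R -> C) (x : R) (l : C) :
  is_Cderive f x l <->
  is_derive (fun y => Re (f y)) x (Re l) /\ is_derive (fun y => Im (f y)) x (Im l).
Proof.
  split.
  - intros H; split.
    + exact (filterdiff_comp' f fst x _ fst H (filterdiff_linear _ is_linear_fst)).
    + exact (filterdiff_comp' f snd x _ snd H (filterdiff_linear _ is_linear_snd)).
  - intros [H1 H2].
    assert (Hpair : is_Cderive (fun y => (Re (f y), Im (f y))) x (Re l, Im l)).
    { apply (filterdiff_comp'_2 (fun y => Re (f y)) (fun y => Im (f y)) pair x _ _ pair H1 H2).
      eapply filterdiff_ext_lin.
      + apply (filterdiff_ext (fun t : prod_NormedModule R_AbsRing R_NormedModule R_NormedModule => t)).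
        * intros [u v]; reflexivity.
        * apply filterdiff_id.
      + intros [u v]; reflexivity. }
    destruct l as [l1 l2].
    eapply is_derive_ext; [|exact Hpair].
    intros y; symmetry; apply surjective_pairing.
Qed.

Lemma is_Cderive_mult (f g : R -> C) (x : R) (df dg : C) :
  is_Cderive f x df -> is_Cderive g x dg ->
  is_Cderive (fun y => f y * g y)%C x (df * g x + f x * dg)%C.
Proof.
  intros [F1 F2]%is_Cderive_parts [G1 G2]%is_Cderive_parts.
  assert (Rcomm : forall u v : R_AbsRing, mult u v = mult v u) by (intros; apply Rmult_comm).
  apply is_Cderive_parts; split.
  - refine (eq_ind _ (is_derive _ x)
      (is_derive_minus _ _ x _ _ (is_derive_mult _ _ x _ _ F1 G1 Rcomm)
                                 (is_derive_mult _ _ x _ _ F2 G2 Rcomm)) _ _).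
    unfold minus, plus, opp, mult, Re, Im; simpl; ring.
  - refine (eq_ind _ (is_derive _ x)
      (is_derive_plus _ _ x _ _ (is_derive_mult _ _ x _ _ F1 G2 Rcomm)
                                (is_derive_mult _ _ x _ _ F2 G1 Rcomm)) _ _).
    unfold plus, mult, Re, Im; simpl; ring.
Qed.

Lemma is_Cderive_scale (c : C) (f : R -> C) (x : R) (df : C) :
  is_Cderive f x df -> is_Cderive (fun y => c * f y)%C x (c * df)%C.
Proof.
  intros Hf.
  refine (eq_ind _ (is_Cderive _ x)
    (is_Cderive_mult _ _ x _ _ (@is_derive_const R_AbsRing C_R_NormedModule c x) Hf) _ _).
  apply injective_projections; simpl; change zero with 0; ring.
Qed.

Lemma is_Cderive_conj (f : R -> C) (x : R) (l : C) :
  is_Cderive f x l -> is_Cderive (fun y => Cconj (f y)) x (Cconj l).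
Proof.
  intros [H1 H2]%is_Cderive_parts; apply is_Cderive_parts; split;
    [exact H1 | exact (is_derive_opp _ x _ H2)].
Qed.

Lemma Cderiv_correct (f : R -> C) (x : R) (l : C) : is_Cderive f x l -> Cderiv f x = l.
Proof.
  intros [H1 H2]%is_Cderive_parts.
  unfold Cderiv; destruct l as [l1 l2].
  apply injective_projections; apply is_derive_unique; assumption.
Qed.

Lemma square_derivatives (u du ddu : R -> C) (y : R) :
  (forall x, is_Cderive u x (du x)) -> (forall x, is_Cderive du x (ddu x)) ->
  is_Cderive (fun x => u x * u x)%C y (du y * u y + u y * du y)%C /\
  is_Cderive (fun x => du x * u x + u x * du x)%C y
    (ddu y * u y + du y * du y + (du y * du y + u y * ddu y))%C.
Proof.
  intros Hu Hdu; split.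
  - apply is_Cderive_mult; apply Hu.
  - apply (is_derive_plus (fun x => du x * u x)%C (fun x => u x * du x)%C);
      apply is_Cderive_mult; auto.
Qed.

Lemma Cmod_le_of_parts (z : C) (M : R) : Rabs (Re z) <= M -> Rabs (Im z) <= M -> Cmod z <= sqrt 2 * M.
Proof.
  intros H1 H2; eapply Rle_trans; [apply Cmod_2Rmax|].
  apply Rmult_le_compat_l; [apply sqrt_pos | apply Rmax_lub; assumption].
Qed.

Definition ev_bounded (g : R -> C) (F : (R -> Prop) -> Prop) : Prop :=
  exists M, F (fun y => Cmod (g y) <= M).

Definition vanishes (g : R -> C) (F : (R -> Prop) -> Prop) : Prop :=
  forall eps, 0 < eps -> F (fun y => Cmod (g y) < eps).

Section EventualBounds.
Context {F : (R -> Prop) -> Prop} {FF : Filter F}.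

Lemma ev_bounded_const (c : C) : ev_bounded (fun _ => c) F.
Proof. exists (Cmod c); apply filter_forall; intros; apply Rle_refl. Qed.

Lemma ev_bounded_plus (f g : R -> C) :
  ev_bounded f F -> ev_bounded g F -> ev_bounded (fun y => f y + g y)%C F.
Proof.
  intros [M HM] [N HN]; exists (M + N).
  eapply filter_imp; [|exact (filter_and _ _ HM HN)].
  intros y [Hf Hg]; eapply Rle_trans; [apply Cmod_triangle | lra].
Qed.

Lemma ev_bounded_mult (f g : R -> C) :
  ev_bounded f F -> ev_bounded g F -> ev_bounded (fun y => f y * g y)%C F.
Proof.
  intros [M HM] [N HN]; exists (M * N).
  eapply filter_imp; [|exact (filter_and _ _ HM HN)].
  intros y [Hf Hg]; rewrite Cmod_mult.
  apply Rmult_le_compat; auto using Cmod_ge_0.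
Qed.

Lemma ev_bounded_opp (f : R -> C) : ev_bounded f F -> ev_bounded (fun y => - f y)%C F.
Proof.
  intros [M HM]; exists M; eapply filter_imp; [|exact HM].
  intros y; rewrite Cmod_opp; auto.
Qed.

Lemma vanishes_mult (f g : R -> C) :
  ev_bounded f F -> vanishes g F -> vanishes (fun y => f y * g y)%C F.
Proof.
  intros [M HM] Hg eps Heps.
  set (M' := Rabs M + 1).
  assert (HM' : 0 < M') by (unfold M'; pose proof (Rabs_pos M); lra).
  eapply filter_imp; [|exact (filter_and _ _ HM (Hg (eps / M') (Rdiv_lt_0_compat _ _ Heps HM')))].
  intros y [Hf Hgy]; rewrite Cmod_mult.
  assert (Cmod (f y) <= M') by (unfold M'; pose proof (Rle_abs M); lra).
  apply Rle_lt_trans with (M' * Cmod (g y)); [apply Rmult_le_compat_r; auto using Cmod_ge_0|].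
  replace eps with (M' * (eps / M')) by (field; lra).
  apply Rmult_lt_compat_l; assumption.
Qed.

Lemma Clim_vanishes (g : R -> C) (l : C) : Clim g F l -> vanishes (fun y => g y - l)%C F.
Proof.
  intros [H1 H2] eps Heps.
  assert (Heps2 : 0 < eps / 2) by lra.
  eapply filter_imp; [|exact (filter_and _ _
    (proj1 (filterlim_locally _ _) H1 (mkposreal _ Heps2))
    (proj1 (filterlim_locally _ _) H2 (mkposreal _ Heps2)))].
  intros y [B1 B2].
  assert (Hsqrt2 : sqrt 2 < 2)
    by (rewrite <- (sqrt_Rsqr 2) at 2 by lra; apply sqrt_lt_1; unfold Rsqr; lra).
  eapply Rle_lt_trans; [apply (Cmod_le_of_parts _ (eps / 2)); left; assumption|].
  nra.
Qed.

Lemma ev_bounded_of_Clim (g : R -> C) (l : C) : Clim g F l -> ev_bounded g F.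
Proof.
  intros Hg; exists (Cmod l + 1).
  eapply filter_imp; [|exact (Clim_vanishes g l Hg 1 Rlt_0_1)].
  intros y Hy; replace (g y) with (g y - l + l)%C by ring.
  eapply Rle_trans; [apply Cmod_triangle | lra].
Qed.

Lemma vanishes_filterlim (g : R -> C) :
  vanishes g F -> @filterlim R C_R_NormedModule g F (locally (RtoC 0)).
Proof.
  intros Hg; apply filterlim_locally; intros eps.
  eapply filter_imp; [|exact (Hg eps (cond_pos eps))].
  intros y Hy; apply (norm_compat1 (K := R_AbsRing) (V := C_R_NormedModule)).
  rewrite <- Cmod_norm.
  match goal with |- Cmod ?z < _ => replace z with (g y); [exact Hy|] end.
  apply injective_projections; simpl; unfold plus, opp; simpl; ring.
Qed.

End EventualBounds.

Definition inverse_square_decay (f : R -> C) (F : (R -> Prop) -> Prop) : Prop :=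
  exists K, F (fun y => Cmod (f y) <= K / (y * y)).

Lemma inverse_square_decay_mult (F : (R -> Prop) -> Prop) (FF : Filter F) (f g : R -> C) :
  inverse_square_decay f F -> ev_bounded g F -> inverse_square_decay (fun y => f y * g y)%C F.
Proof.
  intros [K HK] [M HM]; exists (K * M).
  eapply filter_imp; [|exact (filter_and _ _ HK HM)].
  intros y [Hf Hg]; rewrite Cmod_mult.
  replace (K * M / (y * y)) with (K / (y * y) * M) by (unfold Rdiv; ring).
  apply Rmult_le_compat; auto using Cmod_ge_0.
Qed.

(* On an interval not containing 0, a function dominated by K / y^2 has an integral of
   modulus at most |K/u - K/v| (the integral of the majorant). *)
Lemma RInt_inverse_square_bound (f : R -> C) (K u v : R) :
  0 < u * v ->
  (forall y, Rmin u v <= y <= Rmax u v -> Cmod (f y) <= K / (y * y)) ->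
  @ex_RInt C_R_NormedModule f u v ->
  Cmod (@RInt C_R_CompleteNormedModule f u v) <= Rabs (K / u - K / v).
Proof.
  assert (Hordered : forall u v, u <= v -> 0 < u * v ->
    (forall y, u <= y <= v -> Cmod (f y) <= K / (y * y)) ->
    @ex_RInt C_R_NormedModule f u v ->
    Cmod (@RInt C_R_CompleteNormedModule f u v) <= Rabs (K / u - K / v)).
  { clear u v; intros u v Huv Hpos Hbd Hex.
    assert (Hprim : is_RInt (fun y => K / (y * y)) u v (K / u - K / v)).
    { replace (K / u - K / v) with (minus (- K / v) (- K / u))
        by (unfold minus, plus, opp; simpl; field; split; intros ->; lra).
      apply (is_RInt_derive (fun y => - K / y)); rewrite Rmin_left, Rmax_right by exact Huv;
        intros y Hy; assert (y <> 0) by (intros ->; nra).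
      - auto_derive; [assumption | field; assumption].
      - apply (ex_derive_continuous (K := R_AbsRing) (V := R_NormedModule)); auto_derive; nra. }
    eapply Rle_trans; [|apply Rle_abs].
    rewrite Cmod_norm.
    apply (norm_RInt_le f (fun y => K / (y * y)) u v); [exact Huv | | | exact Hprim].
    - intros y Hy; rewrite <- Cmod_norm; exact (Hbd y Hy).
    - exact (RInt_correct (V := C_R_CompleteNormedModule) _ _ _ Hex). }
  intros Hpos Hbd Hex.
  destruct (Rle_or_lt u v) as [Huv|Hvu].
  - rewrite Rmin_left, Rmax_right in Hbd by exact Huv.
    now apply Hordered.
  - rewrite Rmin_right, Rmax_left in Hbd by lra.
    rewrite <- (opp_RInt_swap (V := C_R_CompleteNormedModule)), Cmod_opp, Rabs_minus_sym
      by exact (ex_RInt_swap _ _ _ Hex).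
    apply Hordered; [lra | lra | exact Hbd | exact (ex_RInt_swap _ _ _ Hex)].
Qed.

(* Comparison test: if f is dominated by K / y^2 on a region S where K / y -> 0, the partial
   integrals of f converge along the filter (they are Cauchy by the previous bound). *)
Lemma dominated_partial_integrals_converge (F : (R -> Prop) -> Prop) (FF : ProperFilter F)
    (f : R -> C) (x K : R) (S : R -> Prop) :
  (forall y, @continuous R_UniformSpace C_R_NormedModule f y) ->
  F S ->
  (forall u v, S u -> S v ->
     0 < u * v /\ forall y, Rmin u v <= y <= Rmax u v -> Cmod (f y) <= K / (y * y)) ->
  filterlim (fun y => K / y) F (locally 0) ->
  exists L : C, @filterlim R C_R_NormedModule (fun u => @RInt C_R_CompleteNormedModule f x u)
                  F (locally L).
Proof.
  intros Hcont HS Hdom Hvanish.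
  assert (Hex : forall a b, @ex_RInt C_R_CompleteNormedModule f a b)
    by (intros a b; apply ex_RInt_continuous; intros z _; apply Hcont).
  apply (filterlim_locally_cauchy (U := C_R_CompleteNormedModule) (F := F)
    (fun u => @RInt C_R_CompleteNormedModule f x u)); intros eps.
  exists (fun y => S y /\ Rabs (K / y) < eps / 2); split.
  { apply (filter_and _ _ HS).
    assert (Heps : 0 < eps / 2) by (pose proof (cond_pos eps); lra).
    eapply filter_imp; [|exact (proj1 (filterlim_locally _ _) Hvanish (mkposreal _ Heps))].
    intros y Hy; change (Rabs (K / y - 0) < eps / 2) in Hy; rewrite Rminus_0_r in Hy; exact Hy. }
  intros u v [Su Ku] [Sv Kv].
  apply (norm_compat1 (K := R_AbsRing) (V := C_R_NormedModule)).
  rewrite <- (RInt_Chasles (V := C_R_CompleteNormedModule) f x u v (Hex x u) (Hex u v)), <- Cmod_norm.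
  unfold minus; rewrite plus_comm, plus_assoc, plus_opp_l, plus_zero_l.
  destruct (Hdom u v Su Sv) as [Hpos Hbd].
  eapply Rle_lt_trans; [exact (RInt_inverse_square_bound f K u v Hpos Hbd (Hex u v))|].
  unfold Rminus; eapply Rle_lt_trans; [apply Rabs_triang|].
  rewrite Rabs_Ropp; lra.
Qed.

Lemma inverse_vanishes_at_infinity (K : R) (s : Rbar) :
  s = m_infty \/ s = p_infty -> filterlim (fun y => K / y) (Rbar_locally s) (locally 0).
Proof.
  intros Hs.
  assert (Hlim : is_lim (fun y => K * / y) s (Rbar_mult K (Rbar_inv s))).
  { apply is_lim_scal_l, is_lim_inv; [apply is_lim_id | destruct Hs; subst s; discriminate]. }
  destruct Hs; subst s; simpl in Hlim; rewrite Rmult_0_r in Hlim; exact Hlim.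
Qed.

Lemma is_RInt_gen_of_limit (F : (R -> Prop) -> Prop) (FF : Filter F)
    (f : R -> C) (x : R) (G : R -> C) (l : C) :
  (forall u, @is_RInt C_R_NormedModule f x u (G u)) ->
  @filterlim R C_R_NormedModule G F (locally l) ->
  @is_RInt_gen C_R_NormedModule f (at_point x) F l.
Proof.
  intros HG Hlim P HP.
  unfold filtermapi.
  apply (Filter_prod _ _ _ (fun v => v = x) (fun u => P (G u))); [reflexivity | exact (Hlim P HP) |].
  intros v u -> Hu; exists (G u); split; [apply HG | exact Hu].
Qed.

Lemma improper_integral_at_infinity (f : R -> C) (s : Rbar) (x : R) :
  s = m_infty \/ s = p_infty ->
  (forall y, @continuous R_UniformSpace C_R_NormedModule f y) ->
  inverse_square_decay f (Rbar_locally s) ->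
  exists L, @is_RInt_gen C_R_NormedModule f (at_point x) (Rbar_locally s) L.
Proof.
  intros Hs Hcont [K HK].
  assert (Hlim : exists L : C, @filterlim R C_R_NormedModule
                   (fun u => @RInt C_R_CompleteNormedModule f x u) (Rbar_locally s) (locally L)).
  { destruct Hs as [-> | ->]; destruct HK as [M HM].
    - apply (dominated_partial_integrals_converge _ (Rbar_locally_filter _) f x K
               (fun y => y < Rmin M (-1))); auto.
      + exists (Rmin M (-1)); auto.
      + intros u v Hu Hv; pose proof (Rmin_l M (-1)); pose proof (Rmin_r M (-1)); split; [nra|].
        intros y Hy; apply HM; pose proof (Rmax_lub_lt u v _ Hu Hv); lra.
      + apply inverse_vanishes_at_infinity; auto.
    - apply (dominated_partial_integrals_converge _ (Rbar_locally_filter _) f x K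
               (fun y => Rmax M 1 < y)); auto.
      + exists (Rmax M 1); auto.
      + intros u v Hu Hv; pose proof (Rmax_l M 1); pose proof (Rmax_r M 1); split; [nra|].
        intros y Hy; apply HM; pose proof (Rmin_glb_lt u v _ Hu Hv); lra.
      + apply inverse_vanishes_at_infinity; auto. }
  destruct Hlim as [L HL]; exists L.
  apply (is_RInt_gen_of_limit _ _ f x (fun u => @RInt C_R_CompleteNormedModule f x u) L);
    [|exact HL].
  intros u; apply (RInt_correct (V := C_R_CompleteNormedModule)).
  apply ex_RInt_continuous; intros z _; apply Hcont.
Qed.

Lemma conv_minus_of_decay (f : R -> C) :
  (forall y, @continuous R_UniformSpace C_R_NormedModule f y) ->
  inverse_square_decay f minf -> conv_minus f.
Proof.
  intros Hcont Hdec x.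
  destruct (improper_integral_at_infinity f m_infty x (or_introl eq_refl) Hcont Hdec) as [L HL].
  exists (opp L); exact (is_RInt_gen_swap f L HL).
Qed.

Lemma conv_plus_of_decay (f : R -> C) :
  (forall y, @continuous R_UniformSpace C_R_NormedModule f y) ->
  inverse_square_decay f pinf -> conv_plus f.
Proof.
  intros Hcont Hdec x.
  exact (improper_integral_at_infinity f p_infty x (or_intror eq_refl) Hcont Hdec).
Qed.

Lemma primitive_vanishing_at (F : (R -> Prop) -> Prop) (FF : Filter F)
    (P h : R -> C) (x : R) :
  (forall y, is_derive P y (h y)) ->
  (forall y, @continuous R_UniformSpace C_R_NormedModule h y) ->
  @filterlim R C_R_NormedModule P F (locally (RtoC 0)) ->
  @is_RInt_gen C_R_NormedModule h (at_point x) F (- P x)%C.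
Proof.
  intros HP Hh Hlim.
  apply (is_RInt_gen_of_limit F FF h x (fun u => minus (P u) (P x))).
  - intros u; apply (is_RInt_derive (V := C_R_CompleteNormedModule)); intros y _; auto.
  - replace (- P x)%C with (plus (RtoC 0) (opp (P x))).
    + exact (@filterlim_comp_2 R C_R_NormedModule C_R_NormedModule C_R_NormedModule
               F (locally (RtoC 0)) (locally (opp (P x))) _ FF P (fun _ => opp (P x)) plus
               Hlim (filterlim_const _) (filterlim_plus _ _)).
    + apply injective_projections; simpl; unfold plus, opp; simpl; ring.
Qed.

Lemma int_minus_sum (g1 g2 : R -> C) (x : R) (l : C) :
  conv_minus g1 -> conv_minus g2 ->
  @is_RInt_gen C_R_NormedModule (fun y => g1 y + g2 y)%C minf (at_point x) l ->
  (int_minus g1 x + int_minus g2 x)%C = l.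
Proof.
  intros C1 C2 Hl.
  rewrite <- (is_RInt_gen_unique (V := C_R_CompleteNormedModule) _ _ Hl); symmetry.
  exact (is_RInt_gen_unique (V := C_R_CompleteNormedModule) _ _
    (is_RInt_gen_plus _ _ _ _ (RInt_gen_correct (V := C_R_CompleteNormedModule) _ (C1 x))
                              (RInt_gen_correct (V := C_R_CompleteNormedModule) _ (C2 x)))).
Qed.

Lemma int_plus_difference (g1 g2 : R -> C) (x : R) (l : C) :
  conv_plus g1 -> conv_plus g2 ->
  @is_RInt_gen C_R_NormedModule (fun y => g1 y - g2 y)%C (at_point x) pinf l ->
  (int_plus g1 x - int_plus g2 x)%C = l.
Proof.
  intros C1 C2 Hl.
  rewrite <- (is_RInt_gen_unique (V := C_R_CompleteNormedModule) _ _ Hl); symmetry.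
  exact (is_RInt_gen_unique (V := C_R_CompleteNormedModule) _ _
    (is_RInt_gen_minus _ _ _ _ (RInt_gen_correct (V := C_R_CompleteNormedModule) _ (C1 x))
                               (RInt_gen_correct (V := C_R_CompleteNormedModule) _ (C2 x)))).
Qed.

Definition potential_bounds (p : R -> C) : Prop :=
  exists K, forall y, Cmod (p y) <= K /\ (y <> 0 -> Cmod (p y) <= K / (y * y)).

Lemma potential_regularity (q : R -> C) :
  rapidly_decaying q ->
  (forall x, is_Cderive (Cderiv q) x (Cderiv (Cderiv q) x)) /\ potential_bounds (Cderiv q).
Proof.
  intros [Hsmooth Hdecay]; split.
  - intros x; apply is_Cderive_parts; split; apply Derive_correct;
      [exact (proj1 (Hsmooth 2%nat x)) | exact (proj2 (Hsmooth 2%nat x))].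
  - destruct (Hdecay 1%nat 0%nat) as [M0 HM0], (Hdecay 1%nat 2%nat) as [M2 HM2].
    exists (sqrt 2 * Rmax M0 M2); intros y; split.
    + destruct (HM0 y) as [B1 B2]; simpl in B1, B2; rewrite Rmult_1_l in B1, B2.
      apply Cmod_le_of_parts; eapply Rle_trans; eauto using Rmax_l.
    + intros Hy.
      assert (Hweight : forall D, Rabs (y ^ 2 * D) <= M2 -> Rabs D <= Rmax M0 M2 / (y * y)).
      { intros D HD; simpl in HD; rewrite Rmult_1_r, Rabs_mult, Rabs_pos_eq in HD by nra.
        assert (Hyy : 0 < y * y) by (destruct (Rlt_or_le 0 y); nra).
        apply (Rmult_le_reg_l (y * y)); [exact Hyy|].
        replace (y * y * (Rmax M0 M2 / (y * y))) with (Rmax M0 M2) by (field; exact Hy).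
        eapply Rle_trans; [exact HD | apply Rmax_r]. }
      destruct (HM2 y) as [B1 B2].
      unfold Rdiv; rewrite Rmult_assoc; apply Cmod_le_of_parts; apply Hweight; assumption.
Qed.

Lemma potential_bounds_conj (p : R -> C) :
  potential_bounds p -> potential_bounds (fun y => Cconj (p y)).
Proof. intros [K HK]; exists K; intros y; rewrite Cmod_conj; apply HK. Qed.

Lemma potential_bounds_at_infinity (p : R -> C) (s : Rbar) :
  s = m_infty \/ s = p_infty -> potential_bounds p ->
  ev_bounded p (Rbar_locally s) /\ inverse_square_decay p (Rbar_locally s).
Proof.
  intros Hs [K HK]; split.
  - exists K; apply filter_forall; intros y; apply HK.
  - exists K; destruct Hs as [-> | ->]; exists 0; intros y Hy; apply HK; lra.
Qed.

Lemma cexp_mult_opp (z : C) : (cexp z * cexp (- z))%C = RtoC 1.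
Proof.
  destruct z as [u v]; unfold cexp, Re, Im; simpl.
  rewrite cos_neg, sin_neg.
  assert (Hexp : exp u * exp (- u) = 1) by (rewrite <- exp_plus, Rplus_opp_r; apply exp_0).
  pose proof (sin2_cos2 v) as Hpyth; unfold Rsqr in Hpyth.
  apply injective_projections; simpl.
  - transitivity (exp u * exp (- u) * (sin v * sin v + cos v * cos v)); [ring|].
    rewrite Hexp, Hpyth; ring.
  - ring.
Qed.

Lemma Cmod_cexp (z : C) : Cmod (cexp z) = exp (Re z).
Proof.
  destruct z as [u v]; unfold cexp, Cmod, Re, Im; simpl.
  pose proof (sin2_cos2 v) as Hpyth; unfold Rsqr in Hpyth.
  replace (exp u * cos v * (exp u * cos v * 1) + exp u * sin v * (exp u * sin v * 1))
    with (exp u * exp u * (sin v * sin v + cos v * cos v)) by ring.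
  rewrite Hpyth, Rmult_1_r; apply sqrt_square; pose proof (exp_pos u); lra.
Qed.

Lemma exp_le_1 (t : R) : t <= 0 -> exp t <= 1.
Proof.
  intros [Hlt | ->]; [|rewrite exp_0; apply Rle_refl].
  rewrite <- exp_0; left; apply exp_increasing, Hlt.
Qed.

(* Re (i lam^2 y) = -2 Re lam Im lam y decides which of e^{+-i lam^2 y} is bounded. *)
Lemma Re_Jost_phase (lam : C) (y : R) : Re (Ci * lam * lam * RtoC y)%C = - (2 * Re lam * Im lam * y).
Proof. destruct lam as [p s]; unfold Ci, RtoC, Re, Im; simpl; ring. Qed.

Definition bounded_with_vanishing_product (a b : R -> C) (F : (R -> Prop) -> Prop) : Prop :=
  ev_bounded a F /\ ev_bounded b F /\ vanishes (fun y => a y * b y)%C F.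

Lemma normalized_column_asymptotics (F : (R -> Prop) -> Prop) (FF : Filter F)
    (a b E E' : R -> C) (l : C) :
  Clim (fun y => a y * E y)%C F l -> Clim (fun y => b y * E y)%C F (RtoC 0) ->
  (forall y, E y * E' y = RtoC 1)%C -> F (fun y => Cmod (E' y) <= 1) ->
  bounded_with_vanishing_product a b F.
Proof.
  intros Ha Hb HE HE'.
  assert (Unnormalize : forall u : R -> C, u = (fun y => u y * E y * E' y)%C).
  { intros u; apply functional_extensionality; intros y.
    rewrite <- Cmult_assoc, HE; ring. }
  assert (BE' : ev_bounded E' F) by (exists 1; exact HE').
  assert (BaE : ev_bounded (fun y => a y * E y)%C F) by exact (ev_bounded_of_Clim _ _ Ha).
  split; [|split].
  - rewrite (Unnormalize a); exact (ev_bounded_mult _ _ BaE BE').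
  - rewrite (Unnormalize b); exact (ev_bounded_mult _ _ (ev_bounded_of_Clim _ _ Hb) BE').
  - replace (fun y => a y * b y)%C
      with (fun y => a y * E y * E' y * E' y * (b y * E y - RtoC 0))%C.
    + apply vanishes_mult; [|exact (Clim_vanishes _ _ Hb)].
      exact (ev_bounded_mult _ _ (ev_bounded_mult _ _ BaE BE') BE').
    + apply functional_extensionality; intros y.
      transitivity (a y * b y * (E y * E' y) * (E y * E' y))%C; [ring|].
      rewrite HE; ring.
Qed.

Lemma first_column_asymptotics (qh : R -> C) (lam : C) (F : (R -> Prop) -> Prop) (FF : Filter F)
    (a b : R -> C) :
  jost_col1 qh lam F a b -> F (fun y => Re lam * Im lam * y <= 0) ->
  bounded_with_vanishing_product a b F.
Proof.
  intros [_ [Ha Hb]] Hphase.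
  apply (normalized_column_asymptotics F FF a b _ (fun y => cexp (- (Ci * lam * lam * RtoC y)))
           (RtoC 1) Ha Hb); [intros y; apply cexp_mult_opp|].
  eapply filter_imp; [|exact Hphase]; intros y Hy.
  rewrite Cmod_cexp; apply exp_le_1.
  change (- Re (Ci * lam * lam * RtoC y)%C <= 0); rewrite Re_Jost_phase; lra.
Qed.

Lemma second_column_asymptotics (qh : R -> C) (lam : C) (F : (R -> Prop) -> Prop) (FF : Filter F)
    (a b : R -> C) :
  jost_col2 qh lam F a b -> F (fun y => 0 <= Re lam * Im lam * y) ->
  bounded_with_vanishing_product a b F.
Proof.
  intros [_ [Ha Hb]] Hphase.
  assert (Hba : bounded_with_vanishing_product b a F).
  { apply (normalized_column_asymptotics F FF b a _ (fun y => cexp (Ci * lam * lam * RtoC y))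
             (RtoC 1) Hb Ha).
    - intros y; rewrite Cmult_comm; apply cexp_mult_opp.
    - eapply filter_imp; [|exact Hphase]; intros y Hy.
      rewrite Cmod_cexp; apply exp_le_1; rewrite Re_Jost_phase; lra. }
  destruct Hba as [Bb [Ba Vba]]; split; [exact Ba | split; [exact Bb|]].
  intros eps Heps; eapply filter_imp; [|exact (Vba eps Heps)].
  intros y; rewrite Cmult_comm; auto.
Qed.

Lemma domain_plus_sign (lam : C) : D_plus lam \/ Sigma lam -> 0 <= Re lam * Im lam.
Proof. unfold D_plus, Sigma; intros [[[A B]|[A B]]|[A|A]]; try rewrite A; nra. Qed.

Lemma domain_minus_sign (lam : C) : D_minus lam \/ Sigma lam -> Re lam * Im lam <= 0.
Proof. unfold D_minus, Sigma; intros [[[A B]|[A B]]|[A|A]]; try rewrite A; nra. Qed.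

Lemma minus_first_column (qh : R -> C) (lam : C) (a b : R -> C) :
  D_plus lam \/ Sigma lam -> jost_col1 qh lam minf a b -> bounded_with_vanishing_product a b minf.
Proof.
  intros Hl J; apply (first_column_asymptotics qh lam minf _ a b J).
  pose proof (domain_plus_sign lam Hl); exists 0; intros y Hy; nra.
Qed.

Lemma minus_second_column (qh : R -> C) (lam : C) (a b : R -> C) :
  D_minus lam \/ Sigma lam -> jost_col2 qh lam minf a b -> bounded_with_vanishing_product a b minf.
Proof.
  intros Hl J; apply (second_column_asymptotics qh lam minf _ a b J).
  pose proof (domain_minus_sign lam Hl); exists 0; intros y Hy; nra.
Qed.

Lemma plus_first_column (qh : R -> C) (lam : C) (a b : R -> C) :
  D_minus lam \/ Sigma lam -> jost_col1 qh lam pinf a b -> bounded_with_vanishing_product a b pinf.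
Proof.
  intros Hl J; apply (first_column_asymptotics qh lam pinf _ a b J).
  pose proof (domain_minus_sign lam Hl); exists 0; intros y Hy; nra.
Qed.

Lemma plus_second_column (qh : R -> C) (lam : C) (a b : R -> C) :
  D_plus lam \/ Sigma lam -> jost_col2 qh lam pinf a b -> bounded_with_vanishing_product a b pinf.
Proof.
  intros Hl J; apply (second_column_asymptotics qh lam pinf _ a b J).
  pose proof (domain_plus_sign lam Hl); exists 0; intros y Hy; nra.
Qed.

Lemma Cmult_neg_half (X Y : C) : X = (- RtoC 2 * Y)%C -> (- / 2 * X)%C = Y.
Proof. intros ->; field. Qed.

(* Pointwise form of L w = -lam^2 w for w = ((a^2)', -(b^2)'), given the equation for
   (a, b), its derivative, and the value -2 i lam a b of the sum of the nonlocal terms. *)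
Lemma L_recursion_identity (lam q r dq dr a b da db dda ddb w1 w2 dw1 dw2 I1 I2 : C) :
  da = (- (Ci * lam * lam) * a + lam * q * b)%C ->
  db = (Ci * lam * lam * b + lam * r * a)%C ->
  dda = (- (Ci * lam * lam) * da + (lam * dq * b + lam * q * db))%C ->
  ddb = (Ci * lam * lam * db + (lam * dr * a + lam * r * da))%C ->
  w1 = (da * a + a * da)%C -> dw1 = (dda * a + da * da + (da * da + a * dda))%C ->
  w2 = (- (db * b + b * db))%C -> dw2 = (- (ddb * b + db * db + (db * db + b * ddb)))%C ->
  (I1 + I2 = - (Ci * lam + Ci * lam) * (a * b))%C ->
  (- / 2 * (Ci * dw1 + dq * I1 + q * r * w1 + dq * I2 + q * q * w2) = - (lam * lam) * w1)%C /\
  (- / 2 * (dr * I1 + r * r * w1 - Ci * dw2 + dr * I2 + q * r * w2) = - (lam * lam) * w2)%C.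
Proof.
  intros -> -> -> -> -> -> -> -> HI.
  replace I2 with (- (Ci * lam + Ci * lam) * (a * b) - I1)%C by (rewrite <- HI; ring).
  split; apply Cmult_neg_half; apply injective_projections; unfold Ci; simpl; ring.
Qed.

(* Pointwise form of \tilde L v = -lam^2 v for v = ((b^2)', (a^2)'), given the value
   -2 i lam a b of the difference of the nonlocal terms. *)
Lemma Lt_recursion_identity (lam q r dq dr a b da db dda ddb v1 v2 dv1 dv2 J1 J2 : C) :
  da = (- (Ci * lam * lam) * a + lam * q * b)%C ->
  db = (Ci * lam * lam * b + lam * r * a)%C ->
  dda = (- (Ci * lam * lam) * da + (lam * dq * b + lam * q * db))%C ->
  ddb = (Ci * lam * lam * db + (lam * dr * a + lam * r * da))%C ->
  v1 = (db * b + b * db)%C -> dv1 = (ddb * b + db * db + (db * db + b * ddb))%C ->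
  v2 = (da * a + a * da)%C -> dv2 = (dda * a + da * da + (da * da + a * dda))%C ->
  (J1 - J2 = - ((Ci * lam + Ci * lam) * (a * b)))%C ->
  (- / 2 * (- (Ci * dv1) - dr * J1 + q * r * v1 + dr * J2 - r * r * v2) = - (lam * lam) * v1)%C /\
  (- / 2 * (dq * J1 - q * q * v1 + Ci * dv2 - dq * J2 + q * r * v2) = - (lam * lam) * v2)%C.
Proof.
  intros -> -> -> -> -> -> -> -> HJ.
  replace J2 with (J1 + (Ci * lam + Ci * lam) * (a * b))%C
    by (replace J2 with (J1 - (J1 - J2))%C by ring; rewrite HJ; ring).
  split; apply Cmult_neg_half; apply injective_projections; unfold Ci; simpl; ring.
Qed.

Section SquaredEigenfunctions.

Variables (lam : C) (qh a b : R -> C).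
Let rh (y : R) : C := Cconj (qh y).
Hypothesis qh_deriv : forall x, is_Cderive qh x (Cderiv qh x).
Hypothesis ode : lax_ode qh lam a b.

Lemma rh_deriv (x : R) : is_Cderive rh x (Cderiv rh x).
Proof.
  pose proof (is_Cderive_conj _ _ _ (qh_deriv x)) as Hx.
  replace (Cderiv rh x) with (Cconj (Cderiv qh x)); [exact Hx|].
  symmetry; exact (Cderiv_correct _ _ _ Hx).
Qed.

Let da (y : R) : C := (- (Ci * lam * lam) * a y + lam * qh y * b y)%C.
Let db (y : R) : C := (Ci * lam * lam * b y + lam * rh y * a y)%C.
Let dda (y : R) : C := (- (Ci * lam * lam) * da y + (lam * Cderiv qh y * b y + lam * qh y * db y))%C.
Let ddb (y : R) : C := (Ci * lam * lam * db y + (lam * Cderiv rh y * a y + lam * rh y * da y))%C.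

Lemma second_derivatives (y : R) : is_Cderive da y (dda y) /\ is_Cderive db y (ddb y).
Proof.
  destruct (ode y) as [Ha Hb]; split.
  - exact (is_derive_plus _ _ y _ _ (is_Cderive_scale _ a y _ Ha)
      (is_Cderive_mult (fun x => lam * qh x)%C b y _ _ (is_Cderive_scale _ qh y _ (qh_deriv y)) Hb)).
  - exact (is_derive_plus _ _ y _ _ (is_Cderive_scale _ b y _ Hb)
      (is_Cderive_mult (fun x => lam * rh x)%C a y _ _ (is_Cderive_scale _ rh y _ (rh_deriv y)) Ha)).
Qed.

Let A (y : R) : C := (da y * a y + a y * da y)%C.
Let B (y : R) : C := (db y * b y + b y * db y)%C.
Let dA (y : R) : C := (dda y * a y + da y * da y + (da y * da y + a y * dda y))%C.
Let dB (y : R) : C := (ddb y * b y + db y * db y + (db y * db y + b y * ddb y))%C.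

Lemma squared_components (y : R) :
  is_Cderive (fun x => a x * a x)%C y (A y) /\ is_Cderive A y (dA y) /\
  is_Cderive (fun x => b x * b x)%C y (B y) /\ is_Cderive B y (dB y).
Proof.
  destruct (square_derivatives a da dda y (fun x => proj1 (ode x))
              (fun x => proj1 (second_derivatives x))) as [Ha HA].
  destruct (square_derivatives b db ddb y (fun x => proj2 (ode x))
              (fun x => proj2 (second_derivatives x))) as [Hb HB].
  exact (conj Ha (conj HA (conj Hb HB))).
Qed.

Lemma sigma3_derivatives_of_squares :
  s3dx1 (fun x => a x * a x)%C = A /\ s3dx2 (fun x => b x * b x)%C = (fun y => - B y)%C /\
  s3dx1 (fun x => b x * b x)%C = B /\ s3dx2 (fun x => - (a x * a x))%C = A.
Proof.
  unfold s3dx1, s3dx2; repeat split; apply functional_extensionality; intros y;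
    destruct (squared_components y) as [Ha [_ [Hb _]]].
  - exact (Cderiv_correct _ _ _ Ha).
  - f_equal; exact (Cderiv_correct _ _ _ Hb).
  - exact (Cderiv_correct _ _ _ Hb).
  - transitivity (- - A y)%C; [f_equal; exact (Cderiv_correct _ _ _ (is_derive_opp _ y _ Ha)) | ring].
Qed.

(* Conservation law: (a b)' = lam (q_x b^2 + q_x^* a^2); it makes the nonlocal terms of
   the recursion operators exact derivatives. *)
Lemma conservation_law (y : R) :
  is_Cderive (fun x => a x * b x)%C y (lam * (qh y * b y * b y + rh y * a y * a y))%C.
Proof.
  refine (eq_ind _ (is_Cderive _ y) (is_Cderive_mult a b y _ _ (proj1 (ode y)) (proj2 (ode y))) _ _).
  match goal with |- ?l = ?r => change (@eq C l r) end; unfold rh; ring.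
Qed.

Lemma squared_components_bounded (F : (R -> Prop) -> Prop) (FF : Filter F) :
  ev_bounded a F -> ev_bounded b F -> ev_bounded qh F -> ev_bounded rh F ->
  ev_bounded A F /\ ev_bounded B F.
Proof.
  intros Ba Bb Bq Br.
  assert (Bda : ev_bounded da F)
    by exact (ev_bounded_plus _ _ (ev_bounded_mult _ _ (ev_bounded_const _) Ba)
                (ev_bounded_mult _ _ (ev_bounded_mult _ _ (ev_bounded_const _) Bq) Bb)).
  assert (Bdb : ev_bounded db F)
    by exact (ev_bounded_plus _ _ (ev_bounded_mult _ _ (ev_bounded_const _) Bb)
                (ev_bounded_mult _ _ (ev_bounded_mult _ _ (ev_bounded_const _) Br) Ba)).
  split; apply ev_bounded_plus; apply ev_bounded_mult; assumption.
Qed.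

Lemma integrands_continuous (y : R) :
  @continuous R_UniformSpace C_R_NormedModule (fun x => rh x * A x)%C y /\
  @continuous R_UniformSpace C_R_NormedModule (fun x => qh x * B x)%C y /\
  @continuous R_UniformSpace C_R_NormedModule (fun x => qh x * - B x)%C y.
Proof.
  destruct (squared_components y) as [_ [HA [_ HB]]].
  repeat split; apply (ex_derive_continuous (K := R_AbsRing) (V := C_R_NormedModule)); eexists.
  - exact (is_Cderive_mult _ _ y _ _ (rh_deriv y) HA).
  - exact (is_Cderive_mult _ _ y _ _ (qh_deriv y) HB).
  - exact (is_Cderive_mult _ _ y _ _ (qh_deriv y) (is_derive_opp _ y _ HB)).
Qed.

Lemma integrands_decay (s : Rbar) :
  s = m_infty \/ s = p_infty -> potential_bounds qh ->
  bounded_with_vanishing_product a b (Rbar_locally s) ->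
  inverse_square_decay (fun x => rh x * A x)%C (Rbar_locally s) /\
  inverse_square_decay (fun x => qh x * B x)%C (Rbar_locally s) /\
  inverse_square_decay (fun x => qh x * - B x)%C (Rbar_locally s).
Proof.
  intros Hs Pq [Ba [Bb _]].
  destruct (potential_bounds_at_infinity qh s Hs Pq) as [Bq Dq].
  destruct (potential_bounds_at_infinity rh s Hs (potential_bounds_conj qh Pq)) as [Br Dr].
  destruct (squared_components_bounded _ _ Ba Bb Bq Br) as [BA BB].
  assert (Fs : Filter (Rbar_locally s)) by exact _.
  repeat split; apply inverse_square_decay_mult; auto using ev_bounded_opp.
Qed.

Lemma product_primitive (c : C) (y : R) :
  is_Cderive (fun x => c * (a x * b x))%C y (c * (lam * (qh y * b y * b y + rh y * a y * a y)))%C.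
Proof. exact (is_Cderive_scale c _ y _ (conservation_law y)). Qed.

Lemma L_integrals :
  potential_bounds qh -> bounded_with_vanishing_product a b minf ->
  conv_minus (fun y => rh y * A y)%C /\ conv_minus (fun y => qh y * - B y)%C /\
  forall x, (int_minus (fun y => rh y * A y)%C x + int_minus (fun y => qh y * - B y)%C x
             = - (Ci * lam + Ci * lam) * (a x * b x))%C.
Proof.
  intros Pq Hab.
  destruct (integrands_decay m_infty (or_introl eq_refl) Pq Hab) as [D1 [_ D2]].
  assert (C1 : conv_minus (fun y => rh y * A y)%C)
    by exact (conv_minus_of_decay _ (fun y => proj1 (integrands_continuous y)) D1).
  assert (C2 : conv_minus (fun y => qh y * - B y)%C)
    by exact (conv_minus_of_decay _ (fun y => proj2 (proj2 (integrands_continuous y))) D2).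
  split; [exact C1 | split; [exact C2 | intros x]].
  set (c := (- (Ci * lam + Ci * lam))%C).
  apply (int_minus_sum _ _ x _ C1 C2).
  replace (c * (a x * b x))%C with (opp (- (c * (a x * b x))))%C by (unfold opp; simpl; ring).
  apply (is_RInt_gen_swap (V := C_R_NormedModule)).
  apply (primitive_vanishing_at minf _ (fun y => c * (a y * b y))%C).
  - intros y; refine (eq_ind _ (is_Cderive _ y) (product_primitive c y) _ _).
    match goal with |- ?l = ?r => change (@eq C l r) end; unfold c, A, B, da, db, rh; ring.
  - intros y; destruct (integrands_continuous y) as [Hr [_ Hq]].
    exact (continuous_plus _ _ y Hr Hq).
  - apply vanishes_filterlim, vanishes_mult; [apply ev_bounded_const | apply Hab].
Qed.

Lemma Lt_integrals :
  potential_bounds qh -> bounded_with_vanishing_product a b pinf ->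
  conv_plus (fun y => qh y * B y)%C /\ conv_plus (fun y => rh y * A y)%C /\
  forall x, (int_plus (fun y => qh y * B y)%C x - int_plus (fun y => rh y * A y)%C x
             = - ((Ci * lam + Ci * lam) * (a x * b x)))%C.
Proof.
  intros Pq Hab.
  destruct (integrands_decay p_infty (or_intror eq_refl) Pq Hab) as [D1 [D2 _]].
  assert (C1 : conv_plus (fun y => qh y * B y)%C)
    by exact (conv_plus_of_decay _ (fun y => proj1 (proj2 (integrands_continuous y))) D2).
  assert (C2 : conv_plus (fun y => rh y * A y)%C)
    by exact (conv_plus_of_decay _ (fun y => proj1 (integrands_continuous y)) D1).
  split; [exact C1 | split; [exact C2 | intros x]].
  set (c := (Ci * lam + Ci * lam)%C).
  apply (int_plus_difference _ _ x _ C1 C2).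
  apply (primitive_vanishing_at pinf _ (fun y => c * (a y * b y))%C).
  - intros y; refine (eq_ind _ (is_Cderive _ y) (product_primitive c y) _ _).
    match goal with |- ?l = ?r => change (@eq C l r) end; unfold c, A, B, da, db, rh; ring.
  - intros y; destruct (integrands_continuous y) as [Hr [Hq _]].
    exact (continuous_minus _ _ y Hq Hr).
  - apply vanishes_filterlim, vanishes_mult; [apply ev_bounded_const | apply Hab].
Qed.

Lemma L_eigen_of_squares :
  potential_bounds qh -> bounded_with_vanishing_product a b minf ->
  L_eigen qh rh lam (s3dx1 (fun x => a x * a x)%C) (s3dx2 (fun x => b x * b x)%C).
Proof.
  intros Pq Hab.
  destruct sigma3_derivatives_of_squares as [-> [-> _]].
  destruct (L_integrals Pq Hab) as [C1 [C2 Hsum]].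
  split; [exact C1 | split; [exact C2 | split]]; intros x;
    destruct (squared_components x) as [_ [HA [_ HB]]].
  - split; eexists; [exact HA | exact (is_derive_opp _ x _ HB)].
  - unfold L_op1, L_op2.
    apply (L_recursion_identity lam (qh x) (rh x) (Cderiv qh x) (Cderiv rh x) (a x) (b x)
             (da x) (db x) (dda x) (ddb x)); try reflexivity.
    + exact (Cderiv_correct _ _ _ HA).
    + exact (Cderiv_correct _ _ _ (is_derive_opp _ x _ HB)).
    + exact (Hsum x).
Qed.

Lemma Lt_eigen_of_squares :
  potential_bounds qh -> bounded_with_vanishing_product a b pinf ->
  Lt_eigen qh rh lam (s3dx1 (fun x => b x * b x)%C) (s3dx2 (fun x => - (a x * a x))%C).
Proof.
  intros Pq Hab.
  destruct sigma3_derivatives_of_squares as [_ [_ [-> ->]]].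
  destruct (Lt_integrals Pq Hab) as [C1 [C2 Hdiff]].
  split; [exact C1 | split; [exact C2 | split]]; intros x;
    destruct (squared_components x) as [_ [HA [_ HB]]].
  - split; eexists; [exact HB | exact HA].
  - unfold Lt_op1, Lt_op2.
    apply (Lt_recursion_identity lam (qh x) (rh x) (Cderiv qh x) (Cderiv rh x) (a x) (b x)
             (da x) (db x) (dda x) (ddb x)); try reflexivity.
    + exact (Cderiv_correct _ _ _ HB).
    + exact (Cderiv_correct _ _ _ HA).
    + exact (Hdiff x).
Qed.

End SquaredEigenfunctions.

Theorem mainTheorem5
  (q : R -> C)
  (phim11 phim21 phim12 phim22 phip11 phip21 phip12 phip22 : C -> R -> C) :
  rapidly_decaying q ->
  let qh := Cderiv q in
  let rh := fun x => Cconj (Cderiv q x) in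
  (forall lam, D_plus lam \/ Sigma lam ->
     jost_col1 qh lam minf (phim11 lam) (phim21 lam)) ->
  (forall lam, D_minus lam \/ Sigma lam ->
     jost_col2 qh lam minf (phim12 lam) (phim22 lam)) ->
  (forall lam, D_minus lam \/ Sigma lam ->
     jost_col1 qh lam pinf (phip11 lam) (phip21 lam)) ->
  (forall lam, D_plus lam \/ Sigma lam ->
     jost_col2 qh lam pinf (phip12 lam) (phip22 lam)) ->
  (forall lam, D_plus lam \/ Sigma lam ->
     L_eigen qh rh lam
       (s3dx1 (fun x => phim11 lam x * phim11 lam x)%C)
       (s3dx2 (fun x => phim21 lam x * phim21 lam x)%C)) /\
  (forall lam, D_minus lam \/ Sigma lam ->
     L_eigen qh rh lam
       (s3dx1 (fun x => phim12 lam x * phim12 lam x)%C)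
       (s3dx2 (fun x => phim22 lam x * phim22 lam x)%C)) /\
  (forall lam, D_minus lam \/ Sigma lam ->
     Lt_eigen qh rh lam
       (s3dx1 (fun x => phip21 lam x * phip21 lam x)%C)
       (s3dx2 (fun x => - (phip11 lam x * phip11 lam x))%C)) /\
  (forall lam, D_plus lam \/ Sigma lam ->
     Lt_eigen qh rh lam
       (s3dx1 (fun x => phip22 lam x * phip22 lam x)%C)
       (s3dx2 (fun x => - (phip12 lam x * phip12 lam x))%C)).
Proof.
  intros Hq qh rh J1 J2 J3 J4.
  destruct (potential_regularity q Hq) as [Dq Pq].
  split; [|split; [|split]]; intros lam Hl.
  - exact (L_eigen_of_squares lam qh _ _ Dq (proj1 (J1 lam Hl)) Pq
             (minus_first_column qh lam _ _ Hl (J1 lam Hl))).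
  - exact (L_eigen_of_squares lam qh _ _ Dq (proj1 (J2 lam Hl)) Pq
             (minus_second_column qh lam _ _ Hl (J2 lam Hl))).
  - exact (Lt_eigen_of_squares lam qh _ _ Dq (proj1 (J3 lam Hl)) Pq
             (plus_first_column qh lam _ _ Hl (J3 lam Hl))).
  - exact (Lt_eigen_of_squares lam qh _ _ Dq (proj1 (J4 lam Hl)) Pq
             (plus_second_column qh lam _ _ Hl (J4 lam Hl))).
Qed.
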